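(* The rational map $F:(x_0,\dots,x_{2n-1})\mapsto(x'_0,\dots,x'_{2n-1})$ on $\mathbb{R}^{2n}$ (indices modulo $2n$) given by $$x'_{2i}=x_{2i-2}\cdot\frac{x_{2i-4}+x_{2i-1}-1}{x_{2i-2}x_{2i-1}-(1-x_{2i+1})(1-x_{2i-4})},\qquad x'_{2i+1}=x_{2i+3}\cdot\frac{x_{2i+2}+x_{2i+5}-1}{x_{2i+2}x_{2i+3}-(1-x_{2i+5})(1-x_{2i})}$$ is birational, with inverse $G:(x'_0,\dots,x'_{2n-1})\mapsto(x_0,\dots,x_{2n-1})$ given by $$x_{2i}=x'_{2i+2}\cdot\frac{x'_{2i+4}+x'_{2i+1}-1}{x'_{2i+1}x'_{2i+2}-(1-x'_{2i-1})(1-x'_{2i+4})},\qquad x_{2i+1}=x'_{2i-1}\cdot\frac{x'_{2i-3}+x'_{2i}-1}{x'_{2i}x'_{2i-1}-(1-x'_{2i+2})(1-x'_{2i-3})};$$ that is, $G\circ F$ and $F\circ G$ are the identity wherever defined.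
   Context: $F$ is the expression, in corner-invariant coordinates of twisted $n$-gons, of the deep diagonal map $T_3$ (labelled $P'_i=P_{i-2}P_{i+1}\cap P_{i-1}P_{i+2}$); $G$ expresses $T_3^{-1}$. *)

From mathcomp Require Import all_boot all_order all_algebra.
Set Implicit Arguments. Unset Strict Implicit. Unset Printing Implicit Defensive.
Import Order.TTheory GRing.Theory Num.Theory.
Local Open Scope ring_scope.

Section Defs.
Variable R : realFieldType.
Variable n : nat.

Definition point := 'I_(n.*2) -> R.

Definition cyc (x : point) (k : int) : R :=
  match @insub nat (fun j => j < n.*2)%N _ (absz (k %% (n.*2)%:Z)%Z) with
  | Some j => x j | None => 0 end.

Definition Fnum_even (x : point) (i : int) : R :=
  cyc x (2*i-2) * (cyc x (2*i-4) + cyc x (2*i-1) - 1).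
Definition Fden_even (x : point) (i : int) : R :=
  cyc x (2*i-2) * cyc x (2*i-1) - (1 - cyc x (2*i+1)) * (1 - cyc x (2*i-4)).
Definition Fnum_odd (x : point) (i : int) : R :=
  cyc x (2*i+3) * (cyc x (2*i+2) + cyc x (2*i+5) - 1).
Definition Fden_odd (x : point) (i : int) : R :=
  cyc x (2*i+2) * cyc x (2*i+3) - (1 - cyc x (2*i+5)) * (1 - cyc x (2*i)).

Definition Gnum_even (y : point) (i : int) : R :=
  cyc y (2*i+2) * (cyc y (2*i+4) + cyc y (2*i+1) - 1).
Definition Gden_even (y : point) (i : int) : R :=
  cyc y (2*i+1) * cyc y (2*i+2) - (1 - cyc y (2*i-1)) * (1 - cyc y (2*i+4)).
Definition Gnum_odd (y : point) (i : int) : R :=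
  cyc y (2*i-1) * (cyc y (2*i-3) + cyc y (2*i) - 1).
Definition Gden_odd (y : point) (i : int) : R :=
  cyc y (2*i) * cyc y (2*i-1) - (1 - cyc y (2*i+2)) * (1 - cyc y (2*i-3)).

(* The map F (deep diagonal map T_3 in corner invariants): coordinate j = 2i or 2i+1 *)
Definition mapF (x : point) : point := fun j =>
  let i : int := (j./2)%:Z in
  if odd j then Fnum_odd x i / Fden_odd x i else Fnum_even x i / Fden_even x i.

Definition mapG (y : point) : point := fun j =>
  let i : int := (j./2)%:Z in
  if odd j then Gnum_odd y i / Gden_odd y i else Gnum_even y i / Gden_even y i.

Definition F_defined (x : point) : Prop :=
  forall i : int, Fden_even x i != 0 /\ Fden_odd x i != 0.
Definition G_defined (y : point) : Prop :=
  forall i : int, Gden_even y i != 0 /\ Gden_odd y i != 0.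

End Defs.

(* F and G make sense on arbitrary sequences a : int -> R and commute with the
   shift of indices by 2; a twisted n-gon is the 2n-periodic sequence [cyc x].
   So G (F a) = a reduces to the coordinates 0 and 1, i.e. to two rational
   identities in a few neighbouring entries of a, checked by [field] once the
   denominators of F involved are nonzero (and symmetrically for F (G a)). *)

From mathcomp Require Import all_boot all_order all_algebra zify ring.
Import Order.TTheory GRing.Theory Num.Theory.
Local Open Scope ring_scope.

Section CornerMaps.
Context {R : fieldType}.
Implicit Types (a b : int -> R) (i m : int).

Definition cnum a (p q r : int) := a p * (a q + a r - 1).
Definition cden a (p q r s : int) := a p * a q - (1 - a r) * (1 - a s).

(* On [a := cyc x] these are, up to unfolding, the coordinate formulas of
   [mapF x] and [mapG x], and [F_regular], [G_regular] below are [F_defined x],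
   [G_defined x]. *)
Definition F_even a i :=
  cnum a (2 * i - 2) (2 * i - 4) (2 * i - 1) / cden a (2 * i - 2) (2 * i - 1) (2 * i + 1) (2 * i - 4).
Definition F_odd a i :=
  cnum a (2 * i + 3) (2 * i + 2) (2 * i + 5) / cden a (2 * i + 2) (2 * i + 3) (2 * i + 5) (2 * i).
Definition G_even a i :=
  cnum a (2 * i + 2) (2 * i + 4) (2 * i + 1) / cden a (2 * i + 1) (2 * i + 2) (2 * i - 1) (2 * i + 4).
Definition G_odd a i :=
  cnum a (2 * i - 1) (2 * i - 3) (2 * i) / cden a (2 * i) (2 * i - 1) (2 * i + 2) (2 * i - 3).

Definition F_regular a := forall i,
  cden a (2 * i - 2) (2 * i - 1) (2 * i + 1) (2 * i - 4) != 0 /\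
  cden a (2 * i + 2) (2 * i + 3) (2 * i + 5) (2 * i) != 0.
Definition G_regular a := forall i,
  cden a (2 * i + 1) (2 * i + 2) (2 * i - 1) (2 * i + 4) != 0 /\
  cden a (2 * i) (2 * i - 1) (2 * i + 2) (2 * i - 3) != 0.

Definition is_Fimage a b := forall i, b (2 * i) = F_even a i /\ b (2 * i + 1) = F_odd a i.
Definition is_Gimage a b := forall i, b (2 * i) = G_even a i /\ b (2 * i + 1) = G_odd a i.

Section Shift.
Context {a a' b b' : int -> R} {m : int}.
Hypothesis a'E : forall k, a' k = a (2 * m + k).
Hypothesis b'E : forall k, b' k = b (2 * m + k).

Lemma F_even_shift i : F_even a' i = F_even a (m + i).
Proof. by rewrite /F_even /cnum /cden !a'E !mulrDr !addrA. Qed.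

Lemma F_odd_shift i : F_odd a' i = F_odd a (m + i).
Proof. by rewrite /F_odd /cnum /cden !a'E !mulrDr !addrA. Qed.

Lemma G_even_shift i : G_even a' i = G_even a (m + i).
Proof. by rewrite /G_even /cnum /cden !a'E !mulrDr !addrA. Qed.

Lemma G_odd_shift i : G_odd a' i = G_odd a (m + i).
Proof. by rewrite /G_odd /cnum /cden !a'E !mulrDr !addrA. Qed.

Lemma F_regular_shift : F_regular a -> F_regular a'.
Proof. by move=> Fa i; have := Fa (m + i); rewrite /cden !a'E !mulrDr !addrA. Qed.

Lemma G_regular_shift : G_regular a -> G_regular a'.
Proof. by move=> Ga i; have := Ga (m + i); rewrite /cden !a'E !mulrDr !addrA. Qed.

Lemma is_Fimage_shift : is_Fimage a b -> is_Fimage a' b'.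
Proof.
move=> ab i; rewrite F_even_shift F_odd_shift !b'E.
by have [<- <-] := ab (m + i); rewrite mulrDr !addrA.
Qed.

Lemma is_Gimage_shift : is_Gimage a b -> is_Gimage a' b'.
Proof.
move=> ab i; rewrite G_even_shift G_odd_shift !b'E.
by have [<- <-] := ab (m + i); rewrite mulrDr !addrA.
Qed.

End Shift.

Lemma Fimage_Gimage0 {a b} : is_Fimage a b -> F_regular a -> G_regular b ->
  G_even b 0 = a 0 /\ G_odd b 0 = a 1.
Proof.
move=> ab Fa Gb; have [Gb0e Gb0o] := Gb 0.
move: (ab 0) (ab 1) (ab 2) (ab (-1)) (ab (-2)) => [b0 b1] [b2 _] [b4 _] [_ bm1] [_ bm3].
move: (Fa 0) (Fa 1) (Fa 2) (Fa (-1)) (Fa (-2)) => [? ?] [? ?] [? ?] [? ?] [? ?].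
(* Clearing the outer denominator first leaves field only the denominators of F. *)
split; [apply: (canLR (mulfK Gb0e)) | apply: (canLR (mulfK Gb0o))].
- rewrite /cnum /cden b1 b2 b4 bm1 /F_even /F_odd /cnum /cden.
  by field; repeat (apply/andP; split).
- rewrite /cnum /cden b0 b2 bm1 bm3 /F_even /F_odd /cnum /cden.
  by field; repeat (apply/andP; split).
Qed.

Lemma Gimage_Fimage0 {a b} : is_Gimage a b -> G_regular a -> F_regular b ->
  F_even b 0 = a 0 /\ F_odd b 0 = a 1.
Proof.
move=> ab Ga Fb; have [Fb0e Fb0o] := Fb 0.
move: (ab 0) (ab 1) (ab 2) (ab (-1)) (ab (-2)) => [b0 b1] [b2 b3] [_ b5] [bm2 bm1] [bm4 _].
move: (Ga 0) (Ga 1) (Ga 2) (Ga (-1)) (Ga (-2)) => [? ?] [? ?] [? ?] [? ?] [? ?].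
split; [apply: (canLR (mulfK Fb0e)) | apply: (canLR (mulfK Fb0o))].
- rewrite /cnum /cden bm2 bm4 bm1 b1 /G_even /G_odd /cnum /cden.
  by field; repeat (apply/andP; split).
- rewrite /cnum /cden b3 b2 b5 b0 /G_even /G_odd /cnum /cden.
  by field; repeat (apply/andP; split).
Qed.

Lemma Fimage_Gimage {a b} : is_Fimage a b -> F_regular a -> G_regular b -> is_Gimage b a.
Proof.
move=> ab Fa Gb i.
pose a' k := a (2 * i + k); pose b' k := b (2 * i + k).
have a'E k : a' k = a (2 * i + k) by [].
have b'E k : b' k = b (2 * i + k) by [].
have [] := Fimage_Gimage0 (is_Fimage_shift a'E b'E ab) (F_regular_shift a'E Fa)
  (G_regular_shift b'E Gb).
by rewrite (G_even_shift b'E) (G_odd_shift b'E) !a'E !addr0 => -> ->.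
Qed.

Lemma Gimage_Fimage {a b} : is_Gimage a b -> G_regular a -> F_regular b -> is_Fimage b a.
Proof.
move=> ab Ga Fb i.
pose a' k := a (2 * i + k); pose b' k := b (2 * i + k).
have a'E k : a' k = a (2 * i + k) by [].
have b'E k : b' k = b (2 * i + k) by [].
have [] := Gimage_Fimage0 (is_Gimage_shift a'E b'E ab) (G_regular_shift a'E Ga)
  (F_regular_shift b'E Fb).
by rewrite (F_even_shift b'E) (F_odd_shift b'E) !a'E !addr0 => -> ->.
Qed.
End CornerMaps.

Section Points.
Context {R : realFieldType} {n : nat}.
Implicit Types x y : point R n.

Lemma cyc_periodic x q k : cyc x (2 * (n%:Z * q) + k) = cyc x k.
Proof.
have -> : 2 * (n%:Z * q) + k = q * (n.*2)%:Z + k by rewrite -muln2 PoszM; ring.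
by rewrite /cyc modzMDl.
Qed.

Lemma cyc_ord x (j : 'I_(n.*2)) : cyc x j = x j.
Proof.
rewrite /cyc modz_small ?ltz_nat ?ltn_ord //.
by case: insubP => [u _ /val_inj -> // | ]; rewrite absz_nat ltn_ord.
Qed.

Lemma eq_point_cyc x y :
  (forall i, cyc x (2 * i) = cyc y (2 * i) /\ cyc x (2 * i + 1) = cyc y (2 * i + 1)) ->
  x =1 y.
Proof.
have kE (k : nat) : k%:Z = 2 * (k./2)%:Z + (odd k)%:Z.
  by rewrite -{1}(odd_double_half k) -muln2 PoszD PoszM addrC mulrC.
move=> xy j; rewrite -!cyc_ord kE.
by have [? ?] := xy (j./2)%:Z; case: odd; rewrite ?addr0.
Qed.

Hypothesis n_gt0 : (0 < n)%N.

Lemma cyc_parity {y} {f : bool -> int -> R} :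
  (forall b q i, f b (n%:Z * q + i) = f b i) ->
  (forall j : 'I_(n.*2), y j = f (odd j) (j./2)%:Z) ->
  forall (b : bool) i, cyc y (2 * i + b%:Z) = f b i.
Proof.
move=> f_per yE b i.
have n_ne0 : n%:Z != 0 by rewrite eqz_nat -lt0n.
set r := (i %% n)%Z; have r_ge0 : 0 <= r := modz_ge0 i n_ne0.
have r_lt : r < n%:Z by apply: ltz_pmod; rewrite ltz_nat.
have k_lt : (b + (`|r|%N).*2 < n.*2)%N.
  by move: r_lt; rewrite -{1}(gez0_abs r_ge0) ltz_nat => ?; case: b; lia.
have -> : 2 * i + b%:Z = 2 * (n%:Z * (i %/ n)%Z) + Ordinal k_lt.
  by rewrite /= PoszD -muln2 PoszM gez0_abs // {1}(divz_eq i n); ring.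
rewrite cyc_periodic cyc_ord yE /= oddD odd_double addbF oddb half_bit_double.
by rewrite gez0_abs // -(f_per b (i %/ n)%Z) mulrC -divz_eq.
Qed.

Lemma cyc_mapF x : is_Fimage (cyc x) (cyc (mapF x)).
Proof.
pose f (b : bool) := if b then F_odd (cyc x) else F_even (cyc x).
have f_per b q i : f b (n%:Z * q + i) = f b i.
  have e k : cyc x k = cyc x (2 * (n%:Z * q) + k) by rewrite cyc_periodic.
  by case: b; rewrite /f -?(F_odd_shift e) -?(F_even_shift e).
have mapFE j : mapF x j = f (odd j) (j./2)%:Z by rewrite /mapF /f; case: odd.
move=> i; have cF := cyc_parity f_per mapFE.
by split; [rewrite -[2 * i]addr0 (cF false) | rewrite (cF true)].
Qed.

Lemma cyc_mapG y : is_Gimage (cyc y) (cyc (mapG y)).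
Proof.
pose f (b : bool) := if b then G_odd (cyc y) else G_even (cyc y).
have f_per b q i : f b (n%:Z * q + i) = f b i.
  have e k : cyc y k = cyc y (2 * (n%:Z * q) + k) by rewrite cyc_periodic.
  by case: b; rewrite /f -?(G_odd_shift e) -?(G_even_shift e).
have mapGE j : mapG y j = f (odd j) (j./2)%:Z by rewrite /mapG /f; case: odd.
move=> i; have cG := cyc_parity f_per mapGE.
by split; [rewrite -[2 * i]addr0 (cG false) | rewrite (cG true)].
Qed.
End Points.

Theorem mainTheorem16 (R : realFieldType) (n : nat) :
  (forall x : point R n,
     F_defined x -> G_defined (mapF x) -> forall j, mapG (mapF x) j = x j) /\
  (forall y : point R n,
     G_defined y -> F_defined (mapG y) -> forall j, mapF (mapG y) j = y j).
Proof.
have [-> | n_gt0] := posnP n; first by split=> ? _ _ [].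
split=> [x Fx GFx | y Gy FGy]; apply: eq_point_cyc => i.
- have [-> ->] := cyc_mapG n_gt0 (mapF x) i.
  by have [xE xO] := Fimage_Gimage (cyc_mapF n_gt0 x) Fx GFx i; rewrite xE xO.
- have [-> ->] := cyc_mapF n_gt0 (mapG y) i.
  by have [yE yO] := Gimage_Fimage (cyc_mapG n_gt0 y) Gy FGy i; rewrite yE yO.
Qed.
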